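(* Let $q$ be a self-join-free Boolean conjunctive query such that $q$ is saturated and the attack graph of $q$ contains no strong cycle. Let $\mathcal{S}$ be an initial strong component in the attack graph of $q$ with $|\mathcal{S}|\ge 2$. Then for every atom $F\in\mathcal{S}$ there exists an atom $H\in\mathcal{S}$ such that $F\to H$ is an edge of the M-graph of $q$.
   Context: Every relation name has a signature $[n,k]$ ($1\le k\le n$; primary-key positions $1,\dots,k$) and a mode in $\{\mathsf{c},\mathsf{i}\}$. For an atom $F$, $\mathrm{key}(F)$ = variables at primary-key positions, $\mathrm{vars}(F)$ = all its variables. A self-join-free Boolean conjunctive query is a finite set of atoms with distinct relation names. $\mathcal{K}(p)=\{\mathrm{key}(F)\to\mathrm{vars}(F)\mid F\in p\}$; $q^{\mathsf{c}}$ = atoms of mode $\mathsf{c}$; $F^{+,q}$ = variables $x$ with $\mathcal{K}(q\setminus\{F\})\cup\mathcal{K}(q^{\mathsf{c}})\models\mathrm{key}(F)\to x$. Attack graph: vertices atoms of $q$, edge $F\to G$ ($F\ne G$) iff there are atoms $F_0=F,\dots,F_\ell=G$ of $q$ and variables $x_i\in(\mathrm{vars}(F_{i-1})\cap\mathrm{vars}(F_i))\setminus F^{+,q}$. Attack weak if $\mathcal{K}(q)\models\mathrm{key}(F)\to\mathrm{key}(G)$, else strong; a cycle is strong if it contains a strong attack. A strong component is initial if no edge enters it from another strong component. $F$ attacks a variable $x$ if $F$ attacks $N(x)$ in $q\cup\{N(x)\}$ ($N$ fresh, signature $[1,1]$). A sequential proof for $\mathcal{K}(q)\models Z\to w$: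 atoms $F_1,\dots,F_\ell$ of $q$ with $\mathrm{key}(F_i)\subseteq Z\cup\bigcup_{j<i}\mathrm{vars}(F_j)$ and $w\in\mathrm{vars}(F_k)$ for some $k$. $Z\to w$ is internal to $q$ if some such proof has no atom attacking a variable of $Z\cup\{w\}$ and $Z\subseteq\mathrm{vars}(F)$ for some $F\in q$. $q$ is saturated if $\mathcal{K}(q^{\mathsf{c}})\models\sigma$ for every $\sigma$ internal to $q$. The M-graph of $q$: vertices atoms of $q$, edge $F\to G$ ($F\ne G$) iff $\mathcal{K}(q^{\mathsf{c}})\models\mathrm{vars}(F)\to\mathrm{key}(G)$. *)

From mathcomp Require Import all_boot.
Set Implicit Arguments. Unset Strict Implicit. Unset Printing Implicit Defensive.

(* A term is a variable (inl x) or a constant (inr c). *)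
Definition term := (nat + nat)%type.

(* An atom: (relation name, terms at primary-key positions 1..k,
   terms at the remaining positions k+1..n, mode) ; mode true = c, false = i.
   Its signature is [k + size rest, k]. *)
Definition atom := (nat * seq term * seq term * bool)%type.
Definition aname (F : atom) : nat := F.1.1.1.
Definition akey (F : atom) : seq term := F.1.1.2.
Definition arest (F : atom) : seq term := F.1.2.
Definition amode (F : atom) : bool := F.2.

Definition tvars (ts : seq term) : seq nat :=
  pmap (fun t => match t with inl x => Some x | inr _ => None end) ts.

Definition key (F : atom) : seq nat := tvars (akey F).
Definition vars (F : atom) : seq nat := tvars (akey F ++ arest F).

Definition query := seq atom.

Definition sjf_bcq (q : query) : Prop :=
  uniq (map aname q) /\ (forall F, F \in q -> 0 < size (akey F)).

Definition fd := (seq nat * seq nat)%type.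
Definition Kset (p : query) : seq fd := [seq (key F, vars F) | F <- p].
Definition cpart (q : query) : query := [seq F <- q | amode F].
Definition remove (q : query) (F : atom) : query := [seq G <- q | G != F].

Inductive closure (K : seq fd) (Z : seq nat) : nat -> Prop :=
| cl_base x : x \in Z -> closure K Z x
| cl_step (f : fd) y :
    f \in K -> (forall x, x \in f.1 -> closure K Z x) -> y \in f.2 ->
    closure K Z y.

Definition entails (K : seq fd) (Z : seq nat) (w : nat) : Prop := closure K Z w.
Definition entails_set (K : seq fd) (Z Y : seq nat) : Prop :=
  forall y, y \in Y -> entails K Z y.

Definition plus (q : query) (F : atom) (x : nat) : Prop :=
  entails (Kset (remove q F) ++ Kset (cpart q)) (key F) x.

Inductive attack_path (q : query) (F : atom) : atom -> Prop :=
| ap_start : attack_path q F F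
| ap_step G H x :
    attack_path q F G -> H \in q -> x \in vars G -> x \in vars H ->
    ~ plus q F x -> attack_path q F H.

Definition attacks (q : query) (F G : atom) : Prop :=
  [/\ F \in q, G \in q, F != G & attack_path q F G].

Definition weak_attack (q : query) (F G : atom) : Prop :=
  attacks q F G /\ entails_set (Kset q) (key F) (key G).
Definition strong_attack (q : query) (F G : atom) : Prop :=
  attacks q F G /\ ~ entails_set (Kset q) (key F) (key G).

Inductive reach (q : query) : atom -> atom -> Prop :=
| reach_refl F : reach q F F
| reach_step F G H : attacks q F G -> reach q G H -> reach q F H.

Definition has_strong_cycle (q : query) : Prop :=
  exists F G, strong_attack q F G /\ reach q G F.

Definition strong_component (q : query) (S : seq atom) : Prop :=
  [/\ S != [::], {subset S <= q},
      (forall F G, F \in S -> G \in S -> reach q F G) &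
      (forall F G, F \in S -> G \in q -> reach q F G -> reach q G F -> G \in S)].

Definition initial_component (q : query) (S : seq atom) : Prop :=
  strong_component q S /\
  (forall G H, G \in q -> G \notin S -> H \in S -> ~ attacks q G H).

(* fresh atom N(x) with signature [1,1] (its mode is immaterial) *)
Definition fresh_name (q : query) : nat := (foldr maxn 0 (map aname q)).+1.
Definition Natom (q : query) (x : nat) : atom :=
  (fresh_name q, [:: inl x], [::], false).

Definition attacks_var (q : query) (F : atom) (x : nat) : Prop :=
  attacks (Natom q x :: q) F (Natom q x).

Definition dummy_atom : atom := (0, [::], [::], false).

Definition seq_proof (q : query) (Z : seq nat) (w : nat) (Fs : seq atom) : Prop :=
  [/\ {subset Fs <= q},
      (forall i, i < size Fs ->
         {subset key (nth dummy_atom Fs i) <= Z ++ flatten (map vars (take i Fs))}) &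
      (exists2 F, F \in Fs & w \in vars F)].

Definition internal (q : query) (Z : seq nat) (w : nat) : Prop :=
  (exists Fs, seq_proof q Z w Fs /\
     forall F x, F \in Fs -> x \in w :: Z -> ~ attacks_var q F x) /\
  (exists2 F, F \in q & {subset Z <= vars F}).

Definition saturated (q : query) : Prop :=
  forall Z w, internal q Z w -> entails (Kset (cpart q)) Z w.

Definition medge (q : query) (F G : atom) : Prop :=
  [/\ F \in q, G \in q, F != G & entails_set (Kset (cpart q)) (vars F) (key G)].

(* Take F in S and a second atom of S. Since S is a strong component, F attacks
   some G in S, and G reaches F back; as the attack graph has no strong cycle,
   the attack F -> G is weak, so K(q \ {F}) |= vars(F) -> key(G).  Let H be the
   first atom of S whose key becomes derivable from vars(F) using only atoms
   outside S (it exists: otherwise atoms of S could never fire, and key(G)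
   would be derivable without them).  Every u in key(H) then has a sequential
   proof from vars(F) made of atoms outside S; because S is initial, none of
   these atoms attacks a variable of F or of H, so vars(F) -> u is internal and
   saturation turns it into K(q^c) |= vars(F) -> u, i.e. F -> H in the M-graph. *)
From Stdlib Require Import Classical.
From Pilot Require Import Defs.
From mathcomp Require Import all_boot.
Set Implicit Arguments. Unset Strict Implicit. Unset Printing Implicit Defensive.

Lemma closure_mono (K1 K2 : seq fd) Z y :
  {subset K1 <= K2} -> Defs.closure K1 Z y -> Defs.closure K2 Z y.
Proof.
move=> sub; elim=> [x xZ | f y' fK _ IH yf]; first exact: cl_base.
exact: (cl_step (sub f fK)).
Qed.

Lemma key_sub_vars (F : atom) : {subset key F <= vars F}.
Proof. by move=> x; rewrite /vars /key /tvars pmap_cat mem_cat => ->. Qed.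

Lemma Kset_sub (p1 p2 : query) : {subset p1 <= p2} -> {subset Kset p1 <= Kset p2}.
Proof. by move=> sub f /mapP [A Ap ->]; apply/mapP; exists A => //; apply: sub. Qed.

Lemma closure_remove_key (q : query) (F : atom) y :
  Defs.closure (Kset q) (key F) y -> Defs.closure (Kset (remove q F)) (vars F) y.
Proof.
elim=> [x xk | f y' /mapP [A Aq ->] _ IH yf]; first exact/cl_base/key_sub_vars.
have [<- | AF] := eqVneq A F; first exact: cl_base.
by apply: (cl_step (f := (key A, vars A))) => //; apply/mapP; exists A; rewrite ?mem_filter ?AF.
Qed.

Lemma closure_filter_notin (Q S : query) Z y :
  (forall H, H \in Q -> H \in S ->
     ~ entails_set (Kset [seq A <- Q | A \notin S]) Z (key H)) ->
  Defs.closure (Kset Q) Z y -> Defs.closure (Kset [seq A <- Q | A \notin S]) Z y.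
Proof.
move=> blocked; elim=> [x xZ | f y' /mapP [A AQ ->] _ IH yf]; first exact: cl_base.
have [AS | AnS] := boolP (A \in S); first by case: (blocked A AQ AS).
by apply: (cl_step (f := (key A, vars A))) => //; apply/mapP; exists A; rewrite ?mem_filter ?AnS.
Qed.

Definition derived (Z : seq nat) (Fs : seq atom) : seq nat := Z ++ flatten (map vars Fs).

Definition sequential (Z : seq nat) (Fs : seq atom) : Prop :=
  forall i, i < size Fs -> {subset key (nth dummy_atom Fs i) <= derived Z (take i Fs)}.

Lemma mem_derived_cat Z s1 s2 x :
  (x \in derived Z (s1 ++ s2)) = (x \in derived Z s1) || (x \in derived Z s2).
Proof. by rewrite /derived map_cat flatten_cat !mem_cat; case: (x \in Z). Qed.

Lemma sequential_cat Z s1 s2 :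
  sequential Z s1 -> sequential Z s2 -> sequential Z (s1 ++ s2).
Proof.
move=> seq1 seq2 i; rewrite size_cat nth_cat take_cat => lti.
have [lt1 | le1] := ltnP i (size s1); first exact: seq1.
have lt2 : i - size s1 < size s2 by rewrite ltn_subLR.
by move=> x /(seq2 _ lt2) x2; rewrite mem_derived_cat x2 orbT.
Qed.

Lemma sequential_rcons Z s A :
  sequential Z s -> {subset key A <= derived Z s} -> sequential Z (s ++ [:: A]).
Proof.
move=> seqs kA i; rewrite size_cat addn1 ltnS nth_cat take_cat => lei.
have [lt1 | le1] := ltnP i (size s); first exact: seqs.
have -> : i = size s by apply/eqP; rewrite eqn_leq lei le1.
by rewrite subnn cats0.
Qed.

Lemma sequential_cover (P : query) Z (s : seq nat) :
  (forall x, x \in s ->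
     exists Fs, [/\ {subset Fs <= P}, sequential Z Fs & x \in derived Z Fs]) ->
  exists Fs, [/\ {subset Fs <= P}, sequential Z Fs & {subset s <= derived Z Fs}].
Proof.
elim: s => [_ | x s IHs cover]; first by exists [::]; split=> // i; rewrite ltn0.
have [|Fs2 [sub2 seq2 cov2]] := IHs; first by move=> z zs; apply: cover; rewrite inE zs orbT.
have [Fs1 [sub1 seq1 cov1]] := cover x (mem_head _ _).
exists (Fs1 ++ Fs2); split; first by move=> B; rewrite mem_cat => /orP [/sub1 | /sub2].
  exact: sequential_cat.
by move=> z; rewrite inE mem_derived_cat => /predU1P [-> | /cov2 ->]; rewrite ?cov1 ?orbT.
Qed.

Lemma closure_sequential (P : query) Z u :
  Defs.closure (Kset P) Z u ->
  exists Fs, [/\ {subset Fs <= P}, sequential Z Fs & u \in derived Z Fs].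
Proof.
elim=> [x xZ | f y /mapP [A AP ->] _ IH /= yf]; first by exists [::]; rewrite /derived cats0.
have [Fs [sub seqFs cov]] := sequential_cover IH.
exists (Fs ++ [:: A]); split.
- by move=> B; rewrite mem_cat mem_seq1 => /orP [/sub | /eqP ->].
- exact: sequential_rcons.
- by rewrite mem_derived_cat /derived /= cats0 !mem_cat yf !orbT.
Qed.

Lemma plus_cons (q : query) N A x : plus q A x -> plus (N :: q) A x.
Proof.
apply: closure_mono => f; rewrite !mem_cat => /orP [] fK; apply/orP; [left | right];
  by move: f fK; apply: Kset_sub => C; rewrite !mem_filter inE => /andP [-> ->]; rewrite orbT.
Qed.

(* An attack path of q + N leaving q must enter N through its only variable y. *)
Lemma attack_path_cons (q : query) N y A K :
  vars N = [:: y] -> A != N -> attack_path (N :: q) A K ->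
  (K != N -> attack_path q A K) /\
  (K = N -> exists2 G, attack_path q A G & y \in vars G /\ ~ plus q A y).
Proof.
move=> varsN AN; elim=> [| G H x _ [IHq IHN] Hq xG xH npx].
  by split=> [_ | eAN]; [exact: ap_start | move: AN; rewrite eAN eqxx].
have npxq : ~ plus q A x by move/(plus_cons N).
have [eHN | HN] := eqVneq H N.
  subst H; move: xH; rewrite varsN mem_seq1 => /eqP xy; subst x; split=> // _.
  have [eGN | GN] := eqVneq G N; first exact: IHN.
  by exists G; first exact: IHq.
have Hq' : H \in q by move: Hq; rewrite inE (negbTE HN).
split=> [_ | eHN]; last by move: HN; rewrite eHN eqxx.
have [eGN | GN] := eqVneq G N; last exact: (ap_step (IHq GN) Hq' xG xH npxq).
move: xG; rewrite eGN varsN mem_seq1 => /eqP xy; subst x.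
by have [G0 pathG0 [yG0 npy]] := IHN eGN; exact: (ap_step pathG0 Hq' yG0 xH npy).
Qed.

Lemma attacks_var_attacks (q : query) A B y :
  A \in q -> B \in q -> A != B -> y \in vars B -> attacks_var q A y -> attacks q A B.
Proof.
move=> Aq Bq AB yB [_ _ AN pathN].
have [_ /(_ erefl) [G pathG [yG npy]]] := attack_path_cons (erefl : vars (Natom q y) = [:: y]) AN pathN.
by split=> //; exact: (ap_step pathG Bq yG yB npy).
Qed.

Lemma reach_trans (q : query) F G H : reach q F G -> reach q G H -> reach q F H.
Proof. by elim=> // F1 G1 H1 a _ IH /IH; apply: reach_step. Qed.

Lemma reach_first_attack (q : query) F G :
  reach q F G -> F != G -> exists2 G1, attacks q F G1 & reach q G1 G.
Proof. by case=> [F0 | F0 G0 H0 aFG0 rG0H0 _]; [rewrite eqxx | exists G0]. Qed.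

Lemma component_attacks_member (q : query) (S : seq atom) F G :
  strong_component q S -> F \in S -> G \in S -> F != G ->
  exists2 G1, G1 \in S & attacks q F G1 /\ reach q G1 F.
Proof.
move=> [_ _ Sreach Sclosed] FS GS /(reach_first_attack (Sreach F G FS GS)) [G1 aFG1 rG1G].
have G1q : G1 \in q by case: aFG1.
have rG1F : reach q G1 F := reach_trans rG1G (Sreach _ _ GS FS).
exists G1 => //; exact: (Sclosed F G1 FS G1q (reach_step aFG1 (reach_refl _ _))).
Qed.

Lemma attack_weak_in_cycle (q : query) F G :
  ~ has_strong_cycle q -> attacks q F G -> reach q G F ->
  entails_set (Kset q) (key F) (key G).
Proof. by move=> nsc aFG rGF; apply: NNPP => strong; apply: nsc; exists F, G. Qed.

Lemma initial_component_no_attack_var (q : query) (S : seq atom) A B x :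
  initial_component q S -> A \in q -> A \notin S -> B \in S -> x \in vars B ->
  ~ attacks_var q A x.
Proof.
move=> [[_ Sq _ _] init] Aq AnS BS xB /(attacks_var_attacks Aq (Sq B BS)) att.
by apply: (init A B) => //; apply: att => //; apply: contraNneq AnS => ->.
Qed.

Lemma internal_outside_initial (q P S : query) F H u :
  initial_component q S -> F \in S -> H \in S ->
  (forall A, A \in P -> A \in q /\ A \notin S) ->
  u \in vars H -> u \notin vars F -> Defs.closure (Kset P) (vars F) u ->
  internal q (vars F) u.
Proof.
move=> initS FS HS Pout uH uF /closure_sequential [Fs [sub seqFs cov]].
split; last by exists F => //; case: initS => [[_ Sq _ _] _]; apply: Sq.
exists Fs; split.
  split=> // [A /sub /Pout [] //|].
  by move: cov; rewrite mem_cat (negbTE uF) => /flattenP [_ /mapP [A AFs ->] uA]; exists A.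
move=> A x /sub /Pout [Aq AnS]; rewrite inE => /predU1P [-> | xF].
  exact: (initial_component_no_attack_var initS Aq AnS HS).
exact: (initial_component_no_attack_var initS Aq AnS FS).
Qed.

Lemma exists_other_member (T : eqType) (s : seq T) x :
  uniq s -> 1 < size s -> exists2 y, y \in s & y != x.
Proof.
move=> us szs; have [/hasP [y ys /= yx] | /hasPn allx] := boolP (has (predC1 x) s).
  by exists y.
have sub : {subset s <= [:: x]}.
  by move=> y /allx /negPn /eqP ->; rewrite mem_seq1.
by move: (uniq_leq_size us sub); rewrite leqNgt szs.
Qed.

Theorem lemma29 (q : query) (S : seq atom) :
  sjf_bcq q -> saturated q -> ~ has_strong_cycle q ->
  initial_component q S -> uniq S -> 2 <= size S ->
  forall F, F \in S -> exists2 H, H \in S & medge q F H.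
Proof.
move=> _ sat nsc initS uS szS F FS.
have [G GS GF] := exists_other_member F uS szS.
have FG : F != G by rewrite eq_sym.
have [G1 G1S [aFG1 rG1F]] := component_attacks_member initS.1 FS GS FG.
have weak := attack_weak_in_cycle nsc aFG1 rG1F.
set P := [seq A <- remove q F | A \notin S].
have [H [HqF HS keyH]] : exists H, [/\ H \in remove q F, H \in S &
    entails_set (Kset P) (vars F) (key H)].
  apply: NNPP => noH; apply: (noH); exists G1; split=> //.
    by case: aFG1 => _ G1q FG1 _; rewrite mem_filter eq_sym FG1.
  move=> x xk; apply: closure_filter_notin (closure_remove_key (weak x xk)).
  by move=> H' H'qF H'S keyH'; apply: noH; exists H'.
move: HqF; rewrite mem_filter => /andP [HF Hq].
exists H => //; split=> //; first by case: aFG1.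
  by rewrite eq_sym.
move=> u uH; have [uF | uF] := boolP (u \in vars F); first exact: cl_base.
apply/sat/(internal_outside_initial initS FS HS _ (key_sub_vars uH) uF (keyH u uH)).
by move=> A; rewrite !mem_filter => /and3P [].
Qed.
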